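(* For any two randomized policies $\boldsymbol\theta,\boldsymbol\theta'\in\boldsymbol\Theta$, $$J^{\boldsymbol\theta'}_{\mu,\sigma}-J^{\boldsymbol\theta}_{\mu,\sigma}=\sum_{i\in\mathcal S}\pi^{\boldsymbol\theta'}(i)\sum_{a\in\mathcal A}(\theta'_{i,a}-\theta_{i,a})\Big\{\sum_{j\in\mathcal S}p^a(i,j)g^{\boldsymbol\theta}(j)+r(i,a)-\beta r(i,a)^2+2\beta J^{\boldsymbol\theta}_\mu r(i,a)\Big\}+\beta\big(J^{\boldsymbol\theta'}_\mu-J^{\boldsymbol\theta}_\mu\big)^2 .$$
   Context: Let $\mathcal S=\{1,\dots,S\}$ be a finite state space and $\mathcal A$ a finite action set, with transition probabilities $p^a(i,j)\ge0$ ($\sum_j p^a(i,j)=1$) and rewards $r(i,a)\in\mathbb R$. Standing assumption: for every deterministic map $d:\mathcal S\to\mathcal A$, the matrix with entries $p^{d(i)}(i,j)$ is irreducible. The randomized policy space is $\boldsymbol\Theta=\{\boldsymbol\theta=(\theta_{i,a})_{i\in\mathcal S,a\in\mathcal A}:\theta_{i,a}\ge0,\ \sum_a\theta_{i,a}=1\ \forall i\}$, where $\theta_{i,a}$ is the probability of choosing action $a$ in state $i$. Under $\boldsymbol\theta$ the transition matrix is $P^{\boldsymbol\theta}(i,j)=\sum_a p^a(i,j)\theta_{i,a}$; it is irreducible (by the standing assumption) with unique stationary distribution $\boldsymbol\pi^{\boldsymbol\theta}$ having positive entries. The mean is $J^{\boldsymbol\theta}_\mu=\sum_i\pi^{\boldsymbol\theta}(i)\sum_a\theta_{i,a}r(i,a)$;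 for fixed $\beta>0$ the cost is $f^{\boldsymbol\theta}(i)=\sum_a\theta_{i,a}[r(i,a)-\beta(r(i,a)-J^{\boldsymbol\theta}_\mu)^2]$ and the mean-variance combined metric is $J^{\boldsymbol\theta}_{\mu,\sigma}=\sum_i\pi^{\boldsymbol\theta}(i)f^{\boldsymbol\theta}(i)$. The potential $\mathbf g^{\boldsymbol\theta}$ is any solution of $\mathbf g^{\boldsymbol\theta}=\mathbf f^{\boldsymbol\theta}-J^{\boldsymbol\theta}_{\mu,\sigma}\mathbf 1+P^{\boldsymbol\theta}\mathbf g^{\boldsymbol\theta}$ (unique up to adding a constant vector). *)

From mathcomp Require Import all_boot all_order all_algebra.
Set Implicit Arguments. Unset Strict Implicit. Unset Printing Implicit Defensive.
Import Order.TTheory GRing.Theory Num.Theory.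
Local Open Scope ring_scope.

(* p a i j = p^a(i,j) *)
Definition transition_kernel (R : realFieldType) (S A : finType)
  (p : A -> S -> S -> R) : Prop :=
  (forall a i j, 0 <= p a i j) /\ (forall a i, \sum_(j : S) p a i j = 1).

Definition irreducible (R : realFieldType) (S : finType) (P : S -> S -> R) : Prop :=
  forall i j : S, connect [rel x y | 0 < P x y] i j.

Definition all_deterministic_irreducible (R : realFieldType) (S A : finType)
  (p : A -> S -> S -> R) : Prop :=
  forall d : S -> A, irreducible (fun i j => p (d i) i j).

Definition is_policy (R : realFieldType) (S A : finType) (th : S -> A -> R) : Prop :=
  (forall i a, 0 <= th i a) /\ (forall i, \sum_(a : A) th i a = 1).

Definition Ptheta (R : realFieldType) (S A : finType)
  (p : A -> S -> S -> R) (th : S -> A -> R) (i j : S) : R :=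
  \sum_(a : A) p a i j * th i a.

Definition stationary (R : realFieldType) (S : finType)
  (P : S -> S -> R) (pi : S -> R) : Prop :=
  [/\ forall i, 0 <= pi i, \sum_(i : S) pi i = 1 &
      forall j, \sum_(i : S) pi i * P i j = pi j].

(* J_mu^theta, given the stationary distribution pi of P^theta *)
Definition Jmu (R : realFieldType) (S A : finType)
  (r : S -> A -> R) (th : S -> A -> R) (pi : S -> R) : R :=
  \sum_(i : S) pi i * \sum_(a : A) th i a * r i a.

Definition fcost (R : realFieldType) (S A : finType) (beta : R)
  (r : S -> A -> R) (th : S -> A -> R) (pi : S -> R) (i : S) : R :=
  \sum_(a : A) th i a * (r i a - beta * (r i a - Jmu r th pi) ^+ 2).

Definition Jms (R : realFieldType) (S A : finType) (beta : R)
  (r : S -> A -> R) (th : S -> A -> R) (pi : S -> R) : R :=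
  \sum_(i : S) pi i * fcost beta r th pi i.

Definition potential (R : realFieldType) (S A : finType) (beta : R)
  (p : A -> S -> S -> R) (r : S -> A -> R) (th : S -> A -> R)
  (pi : S -> R) (g : S -> R) : Prop :=
  forall i, g i = fcost beta r th pi i - Jms beta r th pi
                  + \sum_(j : S) Ptheta p th i j * g j.

From mathcomp Require Import all_boot all_order all_algebra.
From mathcomp Require Import ring.
Set Implicit Arguments. Unset Strict Implicit.
Import Order.TTheory GRing.Theory Num.Theory.
Local Open Scope ring_scope.

(* The identity is purely algebraic.  Write rho(i,a) = r(i,a) - beta r(i,a)^2
   and Q(i,a) = sum_j p^a(i,j) g(j) + rho(i,a) + 2 beta J_mu r(i,a) for the
   "action value" of the policy theta (J_mu, g taken for theta).  Then:
   - expanding the square, f(i) = sum_a theta_{i,a} rho(i,a)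
     + 2 beta J_mu sum_a theta_{i,a} r(i,a) - beta J_mu^2, hence
     J_{mu,sigma} = sum_i pi(i) sum_a theta_{i,a} rho(i,a) + beta J_mu^2;
   - averaging Q under theta and using the Poisson equation for g gives
     sum_a theta_{i,a} Q(i,a) = g(i) + J_{mu,sigma} + beta J_mu^2;
   - averaging Q under theta' and then under the stationary law pi' of
     theta', the term sum_j P^theta'(i,j) g(j) averages back to sum pi' g.
   Subtracting the two averages yields the theorem.  Irreducibility, the
   sign of beta and the stationarity of pi only serve to make pi and g
   well defined; the identity itself does not use them. *)

Lemma weighted_avg_shift (R : pzSemiRingType) (S : finType) (w x : S -> R) (c : R) :
  \sum_(i : S) w i = 1 ->
  \sum_(i : S) w i * (x i + c) = \sum_(i : S) w i * x i + c.
Proof.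
move=> w_sum1; under eq_bigr => i _ do rewrite mulrDr.
by rewrite big_split /= -mulr_suml w_sum1 mul1r.
Qed.

Lemma stationary_avg (R : realFieldType) (S : finType) (P : S -> S -> R)
  (pi g : S -> R) :
  stationary P pi ->
  \sum_(i : S) pi i * \sum_(j : S) P i j * g j = \sum_(j : S) pi j * g j.
Proof.
move=> [_ _ pi_inv]; under eq_bigr => i _ do rewrite mulr_sumr.
rewrite exchange_big /=; apply: eq_bigr => j _.
by rewrite -pi_inv mulr_suml; apply: eq_bigr => i _; ring.
Qed.

Section MeanVariance.
Variables (R : realFieldType) (S A : finType).
Variables (p : A -> S -> S -> R) (r : S -> A -> R) (beta : R).

Definition qvalue (J : R) (g : S -> R) (i : S) (a : A) : R :=
  \sum_(j : S) p a i j * g j + r i a - beta * r i a ^+ 2 + 2 * beta * J * r i a.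

Lemma policy_avg_transition (th : S -> A -> R) (g : S -> R) (i : S) :
  \sum_(a : A) th i a * (\sum_(j : S) p a i j * g j) =
  \sum_(j : S) Ptheta p th i j * g j.
Proof.
under eq_bigr => a _ do rewrite mulr_sumr.
rewrite exchange_big /=; apply: eq_bigr => j _.
by rewrite /Ptheta mulr_suml; apply: eq_bigr => a _; ring.
Qed.

Lemma policy_avg_qvalue (th : S -> A -> R) (J : R) (g : S -> R) (i : S) :
  \sum_(a : A) th i a * qvalue J g i a =
  \sum_(j : S) Ptheta p th i j * g j
  + \sum_(a : A) th i a * (r i a - beta * r i a ^+ 2)
  + 2 * beta * J * \sum_(a : A) th i a * r i a.
Proof.
rewrite -policy_avg_transition mulr_sumr -!big_split /=.
by apply: eq_bigr => a _; rewrite /qvalue; ring.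
Qed.

Lemma fcost_expand (th : S -> A -> R) (pi : S -> R) (i : S) :
  is_policy th ->
  fcost beta r th pi i =
  \sum_(a : A) th i a * (r i a - beta * r i a ^+ 2)
  + 2 * beta * Jmu r th pi * \sum_(a : A) th i a * r i a
  - beta * Jmu r th pi ^+ 2.
Proof.
move=> [_ th_sum1]; rewrite /fcost; set J := Jmu r th pi.
have -> : beta * J ^+ 2 = beta * J ^+ 2 * \sum_(a : A) th i a.
  by rewrite th_sum1 mulr1.
rewrite (mulr_sumr _ _ _ (2 * beta * J)) (mulr_sumr _ _ _ (beta * J ^+ 2)).
by rewrite -big_split -sumrB /=; apply: eq_bigr => a _; ring.
Qed.

Lemma Jms_expand (th : S -> A -> R) (pi : S -> R) :
  is_policy th -> \sum_(i : S) pi i = 1 ->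
  Jms beta r th pi =
  \sum_(i : S) pi i * \sum_(a : A) th i a * (r i a - beta * r i a ^+ 2)
  + beta * Jmu r th pi ^+ 2.
Proof.
move=> hth pi_sum1; rewrite /Jms.
under eq_bigr => i _ do rewrite (fcost_expand _ _ hth).
set J := Jmu r th pi.
transitivity (\sum_(i : S) (pi i * \sum_(a : A) th i a * (r i a - beta * r i a ^+ 2)
    + 2 * beta * J * (pi i * \sum_(a : A) th i a * r i a) - beta * J ^+ 2 * pi i)).
  by apply: eq_bigr => i _; ring.
rewrite sumrB big_split /= -!mulr_sumr pi_sum1 -/(Jmu r th pi) -/J; ring.
Qed.

(* Under the policy that defines g, Q averages to g(i) + J_{mu,sigma} + beta J_mu^2:
   this is the Poisson equation rewritten in terms of Q. *)
Lemma policy_avg_qvalue_potential (th : S -> A -> R) (pi g : S -> R) (i : S) :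
  is_policy th -> potential beta p r th pi g ->
  \sum_(a : A) th i a * qvalue (Jmu r th pi) g i a =
  g i + (Jms beta r th pi + beta * Jmu r th pi ^+ 2).
Proof.
move=> hth hpot; rewrite policy_avg_qvalue [in RHS]hpot fcost_expand //; ring.
Qed.

(* The pi-average of the th-average of Q, for any constant J, when pi is
   stationary for th: the transition term averages back to the pi-mean of g. *)
Lemma stationary_avg_qvalue (th : S -> A -> R) (pi : S -> R) (J : R) (g : S -> R) :
  is_policy th -> stationary (Ptheta p th) pi ->
  \sum_(i : S) pi i * \sum_(a : A) th i a * qvalue J g i a =
  \sum_(i : S) pi i * g i + (Jms beta r th pi - beta * Jmu r th pi ^+ 2)
  + 2 * beta * J * Jmu r th pi.
Proof.
move=> hth hstat; have pi_sum1 : \sum_(i : S) pi i = 1 by case: hstat.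
rewrite (Jms_expand hth pi_sum1) addrK.
under eq_bigr => i _ do rewrite policy_avg_qvalue !mulrDr.
rewrite !big_split /= stationary_avg //.
under [X in _ + X]eq_bigr => i _ do rewrite mulrCA.
by rewrite -mulr_sumr.
Qed.

End MeanVariance.

Theorem mainTheorem7 (R : realFieldType) (S A : finType)
  (p : A -> S -> S -> R) (r : S -> A -> R) (beta : R)
  (th th' : S -> A -> R) (pi pi' g : S -> R) :
  transition_kernel p ->
  all_deterministic_irreducible p ->
  0 < beta ->
  is_policy th -> is_policy th' ->
  stationary (Ptheta p th) pi ->
  stationary (Ptheta p th') pi' ->
  potential beta p r th pi g ->
  Jms beta r th' pi' - Jms beta r th pi =
    \sum_(i : S) pi' i * \sum_(a : A) (th' i a - th i a) *
       (\sum_(j : S) p a i j * g j + r i a - beta * r i a ^+ 2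
        + 2 * beta * Jmu r th pi * r i a)
    + beta * (Jmu r th' pi' - Jmu r th pi) ^+ 2.
Proof.
move=> _ _ _ hth hth' _ hstat' hpot.
have pi'_sum1 : \sum_(i : S) pi' i = 1 by case: hstat'.
set J := Jmu r th pi; set M := Jms beta r th pi.
have split_diff : forall i,
    \sum_(a : A) (th' i a - th i a) * qvalue p r beta J g i a =
    \sum_(a : A) th' i a * qvalue p r beta J g i a - (g i + (M + beta * J ^+ 2)).
  move=> i; rewrite -(policy_avg_qvalue_potential i hth hpot) -sumrB.
  by apply: eq_bigr => a _; rewrite mulrBl.
rewrite -/(qvalue p r beta J g _ _).
under eq_bigr => i _ do rewrite split_diff mulrBr.
rewrite sumrB stationary_avg_qvalue // weighted_avg_shift //; ring.
Qed.
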